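(* Let $n\ge 2$ be even. Consider the generalized $n$-gene repressilator system $$\dot r_i = a_i(p_{i-1}) - d_{r_i}(r_i),\qquad \dot p_i = k_i(r_i) - d_{p_i}(p_i),\qquad i=1,\dots,n,$$ (indices mod $n$), with functions satisfying the standing assumptions in the context. Assume $\alpha_i:=\lim_{x\to\infty}a_i(x)>0$ for all $i$, and that for all $i$, $\delta_i^R > a_i(0)$ and $\delta_i^P > k_i(d_{r_i}^{-1}(a_i(0)))$, where $\delta_i^R:=\lim_{x\to\infty} d_{r_i}(x)$ and $\delta_i^P:=\lim_{x\to\infty} d_{p_i}(x)$ (possibly $+\infty$). Then the central steady state $E_C$ exists and is a steady state: for each $i$ the fixed-point equation $p_i = f_i\circ f_{i-1}\circ\cdots\circ f_1\circ f_n\circ\cdots\circ f_{i+1}(p_i)$ has a positive solution, and there are such solutions $p_1^*,\dots,p_n^*>0$ for which $$E_C=\big(d_{r_1}^{-1}(a_1(p_n^* )),\dots,d_{r_n}^{-1}(a_n(p_{n-1}^* )),\,p_1^*,\dots,p_n^*\big)$$ is a steady state.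
   Context: Standing assumptions: each $a_i:[0,\infty)\to\mathbb{R}$ is $C^1$, nonnegative, strictly decreasing, with $a_i(0)>0$. Each $d_{r_i}, d_{p_i}, k_i:[0,\infty)\to\mathbb{R}$ is $C^1$, vanishes at $0$, and is strictly increasing on $(0,\infty)$. Define $f_i := d_{p_i}^{-1}\circ k_i\circ d_{r_i}^{-1}\circ a_i$. *)

From Stdlib Require Import Reals Lra Lia Arith ClassicalEpsilon.
From Coquelicot Require Import Coquelicot.
Open Scope R_scope.

(* f is C^1 on [0,oo): f agrees on [0,oo) with a C^1 function on R
   (equivalent to C^1 on [0,oo) with a one-sided derivative at 0). *)
Definition C1_nonneg (f : R -> R) : Prop :=
  exists g : R -> R,
    (forall x, ex_derive g x) /\ (forall x, continuous (Derive g) x) /\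
    (forall x, 0 <= x -> f x = g x).

Definition strict_decr_nonneg (f : R -> R) : Prop :=
  forall x y, 0 <= x -> x < y -> f y < f x.

Definition strict_incr_pos (f : R -> R) : Prop :=
  forall x y, 0 < x -> x < y -> f x < f y.

(* Inverse of g viewed as a map on [0,oo): some x >= 0 with g x = y
   (unique when g is injective on [0,oo)); arbitrary if none exists. *)
Definition inv_nonneg (g : R -> R) (y : R) : R :=
  epsilon (inhabits 0) (fun x => 0 <= x /\ g x = y).

(* Indices are 0-based: i = 0..n-1; predecessor mod n. *)
Definition prev (n i : nat) : nat := ((i + n - 1) mod n)%nat.

Definition fmap (a dr dp k : nat -> R -> R) (i : nat) (x : R) : R :=
  inv_nonneg (dp i) (k i (inv_nonneg (dr i) (a i x))).

Fixpoint comp_from (F : nat -> R -> R) (n start m : nat) (x : R) : R :=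
  match m with
  | O => x
  | S m' => comp_from F n (S start) m' (F (start mod n)%nat x)
  end.

(* f_i o f_{i-1} o ... o f_1 o f_n o ... o f_{i+1}  (first f_{i+1}, last f_i) *)
Definition cyc_map (F : nat -> R -> R) (n i : nat) (x : R) : R :=
  comp_from F n (S i) n x.

Definition standing (n : nat) (a dr dp k : nat -> R -> R) : Prop :=
  forall i, (i < n)%nat ->
    (C1_nonneg (a i) /\ (forall x, 0 <= x -> 0 <= a i x) /\
       strict_decr_nonneg (a i) /\ 0 < a i 0) /\
    (C1_nonneg (dr i) /\ dr i 0 = 0 /\ strict_incr_pos (dr i)) /\
    (C1_nonneg (dp i) /\ dp i 0 = 0 /\ strict_incr_pos (dp i)) /\
    (C1_nonneg (k i) /\ k i 0 = 0 /\ strict_incr_pos (k i)).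

Definition steady_state (n : nat) (a dr dp k : nat -> R -> R)
    (r p : nat -> R) : Prop :=
  forall i, (i < n)%nat ->
    a i (p (prev n i)) - dr i (r i) = 0 /\ k i (r i) - dp i (p i) = 0.

From Stdlib Require Import Reals Arith Lra Lia ClassicalEpsilon.
From Coquelicot Require Import Coquelicot.
Open Scope R_scope.

(* Each f_i = d_{p_i}^{-1} o k_i o d_{r_i}^{-1} o a_i is positive and nonincreasing on
   [0,oo): a_i is decreasing while the other three maps are increasing, and the bounds
   delta_i^R > a_i(0), delta_i^P > k_i(d_{r_i}^{-1}(a_i(0))) make both inverses defined on
   the relevant ranges (by the intermediate value theorem).  For even n the cyclic
   composition of the f_i is therefore nondecreasing and maps [0,oo) into [0, f_j(0)],
   f_j its last factor, so the supremum argument of Knaster-Tarski gives it a fixed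
   point, which is positive.  Following its orbit through f_1, ..., f_n yields
   p*_1, ..., p*_n, and setting r_i = d_{r_i}^{-1}(a_i(p*_{i-1})) makes every equation
   of the system vanish. *)

Definition rate_fun (h : R -> R) : Prop :=
  C1_nonneg h /\ h 0 = 0 /\ strict_incr_pos h.

Lemma C1_nonneg_continuous_ext (h : R -> R) :
  C1_nonneg h -> exists g, (forall x, continuous g x) /\ forall x, 0 <= x -> h x = g x.
Proof.
  intros [g [g_derive [_ g_ext]]]. exists g. split; [|exact g_ext].
  intro x. apply (ex_derive_continuous (K := R_AbsRing) (V := R_NormedModule)), g_derive.
Qed.

(* Strict monotonicity is only assumed on (0,oo); continuity at 0 extends it to [0,oo). *)
Lemma rate_fun_lt (h : R -> R) (x y : R) : rate_fun h -> 0 <= x -> x < y -> h x < h y.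
Proof.
  intros [h_C1 [h0 h_incr]] x_ge0 lt_xy.
  destruct (Rle_lt_or_eq_dec 0 x x_ge0) as [x_gt0 | <-]; [now apply h_incr|].
  destruct (C1_nonneg_continuous_ext h h_C1) as [g [g_cont h_g]].
  enough (h 0 <= h (y / 2)) by (pose proof (h_incr (y / 2) y ltac:(lra) ltac:(lra)); lra).
  rewrite !h_g by lra.
  apply (closed_filterlim_loc (F := at_right 0) g (fun u => u <= g (y / 2))).
  - apply (filterlim_filter_le_1 (F := locally 0)); [apply filter_le_within | apply g_cont].
  - assert (y2_gt0 : 0 < y / 2) by lra.
    exists (mkposreal _ y2_gt0). intros w w_near w_gt0.
    change (Rabs (w - 0) < y / 2) in w_near. apply Rabs_lt_between in w_near.
    rewrite <- !h_g by lra. left. apply h_incr; lra.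
  - apply closed_le.
Qed.

Lemma rate_fun_le (h : R -> R) (x y : R) : rate_fun h -> 0 <= x -> x <= y -> h x <= h y.
Proof.
  intros h_rate x_ge0 le_xy. destruct (Req_dec x y) as [-> | ne_xy]; [lra|].
  left. apply rate_fun_lt; auto; lra.
Qed.

Lemma rate_fun_attains (h : R -> R) (b u : R) :
  rate_fun h -> 0 <= b -> 0 <= u <= h b -> exists y, 0 <= y /\ h y = u.
Proof.
  intros [h_C1 [h0 _]] b_ge0 u_range.
  destruct (C1_nonneg_continuous_ext h h_C1) as [g [g_cont h_g]].
  assert (g_continuity : continuity g)
    by (intro x; apply continuity_pt_filterlim, g_cont).
  destruct (IVT_gen g 0 b u g_continuity) as [y [y_range gy]].
  { rewrite <- !h_g by lra. rewrite h0, Rmin_left, Rmax_right; lra. }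
  rewrite Rmin_left, Rmax_right in y_range by lra.
  exists y. split; [lra|]. rewrite h_g; lra.
Qed.

Lemma inv_nonneg_spec (h : R -> R) (b u : R) :
  rate_fun h -> 0 <= b -> 0 <= u <= h b ->
  0 <= inv_nonneg h u /\ h (inv_nonneg h u) = u.
Proof.
  intros h_rate b_ge0 u_range. unfold inv_nonneg. apply epsilon_spec.
  exact (rate_fun_attains h b u h_rate b_ge0 u_range).
Qed.

Lemma inv_nonneg_le (h : R -> R) (b u v : R) :
  rate_fun h -> 0 <= b -> 0 <= u -> u <= v -> v <= h b ->
  inv_nonneg h u <= inv_nonneg h v.
Proof.
  intros h_rate b_ge0 u_ge0 le_uv v_le.
  destruct (inv_nonneg_spec h b u h_rate b_ge0 ltac:(lra)) as [_ hu].
  destruct (inv_nonneg_spec h b v h_rate b_ge0 ltac:(lra)) as [v'_ge0 hv].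
  destruct (Rle_or_lt (inv_nonneg h u) (inv_nonneg h v)) as [| lt_vu]; [assumption|].
  pose proof (rate_fun_lt h _ _ h_rate v'_ge0 lt_vu). lra.
Qed.

Lemma inv_nonneg_pos (h : R -> R) (b u : R) :
  rate_fun h -> 0 <= b -> 0 < u <= h b -> 0 < inv_nonneg h u.
Proof.
  intros h_rate b_ge0 u_range.
  destruct (inv_nonneg_spec h b u h_rate b_ge0 ltac:(lra)) as [u'_ge0 hu].
  destruct (Rle_lt_or_eq_dec _ _ u'_ge0) as [| u'_0]; [assumption|].
  destruct h_rate as [_ [h0 _]]. rewrite <- u'_0, h0 in hu. lra.
Qed.

Lemma is_lim_eventually_ge (f : R -> R) (l : Rbar) (u : R) :
  is_lim f p_infty l -> Rbar_lt u l -> exists b, 0 <= b /\ u <= f b.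
Proof.
  intros f_lim u_lt. destruct (f_lim _ (open_Rbar_gt' _ _ u_lt)) as [M f_gt].
  exists (Rmax 0 (M + 1)). pose proof (Rmax_l 0 (M + 1)). pose proof (Rmax_r 0 (M + 1)).
  split; [lra|]. left. apply f_gt. lra.
Qed.

Section GeneMap.

Variables (A Dr Dp K : R -> R) (br bp : R).
Hypotheses (A_nonneg : forall x, 0 <= x -> 0 <= A x) (A_decr : strict_decr_nonneg A).
Hypotheses (Dr_rate : rate_fun Dr) (Dp_rate : rate_fun Dp) (K_rate : rate_fun K).
Hypotheses (br_ge0 : 0 <= br) (A0_le : A 0 <= Dr br).
Hypotheses (bp_ge0 : 0 <= bp) (K_A0_le : K (inv_nonneg Dr (A 0)) <= Dp bp).

Lemma A_range x : 0 <= x -> 0 < A x <= A 0.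
Proof.
  intros x_ge0. pose proof (A_decr x (x + 1) x_ge0 ltac:(lra)).
  pose proof (A_nonneg (x + 1) ltac:(lra)).
  destruct (Req_dec x 0) as [-> | x_ne0]; [lra|].
  pose proof (A_decr 0 x ltac:(lra) ltac:(lra)). lra.
Qed.

Lemma mrna_spec x : 0 <= x ->
  0 < inv_nonneg Dr (A x) /\ Dr (inv_nonneg Dr (A x)) = A x.
Proof.
  intros x_ge0. pose proof (A_range x x_ge0). split.
  - apply (inv_nonneg_pos Dr br); auto; lra.
  - apply (inv_nonneg_spec Dr br); auto; lra.
Qed.

Lemma mrna_antitone x y : 0 <= x -> x <= y ->
  inv_nonneg Dr (A y) <= inv_nonneg Dr (A x).
Proof.
  intros x_ge0 le_xy. pose proof (A_range x x_ge0). pose proof (A_range y ltac:(lra)).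
  apply (inv_nonneg_le Dr br); auto; try lra.
  destruct (Req_dec x y) as [-> | ne_xy]; [lra|]. left; apply A_decr; lra.
Qed.

Lemma protein_range x : 0 <= x ->
  0 < K (inv_nonneg Dr (A x)) <= Dp bp.
Proof.
  intros x_ge0. destruct (mrna_spec x x_ge0) as [r_pos _].
  destruct K_rate as [_ [K0 _]]. split.
  - rewrite <- K0. now apply rate_fun_lt; [| lra |].
  - eapply Rle_trans; [| exact K_A0_le].
    apply rate_fun_le; [| lra | apply mrna_antitone]; auto; lra.
Qed.

Lemma gene_map_spec x : 0 <= x ->
  0 < inv_nonneg Dp (K (inv_nonneg Dr (A x))) /\
  Dp (inv_nonneg Dp (K (inv_nonneg Dr (A x)))) = K (inv_nonneg Dr (A x)).
Proof.
  intros x_ge0. pose proof (protein_range x x_ge0). split.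
  - apply (inv_nonneg_pos Dp bp); auto.
  - apply (inv_nonneg_spec Dp bp); auto; lra.
Qed.

Lemma gene_map_antitone x y : 0 <= x -> x <= y ->
  inv_nonneg Dp (K (inv_nonneg Dr (A y))) <= inv_nonneg Dp (K (inv_nonneg Dr (A x))).
Proof.
  intros x_ge0 le_xy. pose proof (protein_range y ltac:(lra)).
  pose proof (protein_range x x_ge0).
  apply (inv_nonneg_le Dp bp); auto; try lra.
  apply rate_fun_le; [exact K_rate | | apply mrna_antitone; auto].
  now apply Rlt_le, mrna_spec; lra.
Qed.

End GeneMap.

Lemma standing_gene n a dr dp k i :
  standing n a dr dp k -> (i < n)%nat ->
  (exists deltaR : Rbar, is_lim (dr i) p_infty deltaR /\ Rbar_lt (a i 0) deltaR) ->
  (exists deltaP : Rbar, is_lim (dp i) p_infty deltaP /\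
     Rbar_lt (k i (inv_nonneg (dr i) (a i 0))) deltaP) ->
  (forall x, 0 <= x ->
     0 < fmap a dr dp k i x /\
     a i x - dr i (inv_nonneg (dr i) (a i x)) = 0 /\
     k i (inv_nonneg (dr i) (a i x)) - dp i (fmap a dr dp k i x) = 0) /\
  (forall x y, 0 <= x -> x <= y -> fmap a dr dp k i y <= fmap a dr dp k i x).
Proof.
  intros st i_lt [deltaR [dr_lim a0_lt]] [deltaP [dp_lim k_lt]].
  destruct (st i i_lt) as [[_ [a_nonneg [a_decr _]]] [dr_rate [dp_rate k_rate]]].
  destruct (is_lim_eventually_ge _ _ _ dr_lim a0_lt) as [br [br_ge0 a0_le]].
  destruct (is_lim_eventually_ge _ _ _ dp_lim k_lt) as [bp [bp_ge0 k_le]].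
  split.
  - intros x x_ge0.
    destruct (mrna_spec (a i) (dr i) br a_nonneg a_decr dr_rate br_ge0 a0_le x x_ge0)
      as [_ r_eq].
    destruct (gene_map_spec (a i) (dr i) (dp i) (k i) br bp a_nonneg a_decr dr_rate
      dp_rate k_rate br_ge0 a0_le bp_ge0 k_le x x_ge0) as [p_pos p_eq].
    unfold fmap. repeat split; lra.
  - exact (gene_map_antitone (a i) (dr i) (dp i) (k i) br bp a_nonneg a_decr dr_rate
      dp_rate k_rate br_ge0 a0_le bp_ge0 k_le).
Qed.

Lemma monotone_bounded_fixpoint (G : R -> R) (M : R) :
  (forall x, 0 <= x -> 0 <= G x <= M) ->
  (forall x y, 0 <= x -> x <= y -> G x <= G y) ->
  exists c, 0 <= c /\ G c = c.
Proof.
  intros G_range G_mono.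
  pose proof (G_range 0 (Rle_refl 0)) as G0.
  set (E := fun x => 0 <= x <= M /\ x <= G x).
  destruct (completeness E) as [c [c_ub c_least]].
  - exists M. intros x [x_range _]. lra.
  - exists 0. unfold E. lra.
  - assert (c_ge0 : 0 <= c) by (apply c_ub; unfold E; lra).
    assert (c_le : c <= G c).
    { apply c_least. intros x [x_range x_le].
      apply (Rle_trans _ _ _ x_le), G_mono; [lra | apply c_ub; now split]. }
    assert (EGc : E (G c)) by (split; [apply G_range | apply G_mono]; auto).
    exists c. split; [exact c_ge0|]. pose proof (c_ub _ EGc). lra.
Qed.

Section Cycle.

Variables (F : nat -> R -> R) (n : nat).
Hypotheses (n_pos : (0 < n)%nat).
Hypotheses (F_pos : forall i, (i < n)%nat -> forall x, 0 <= x -> 0 < F i x).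
Hypotheses (F_antitone : forall i, (i < n)%nat ->
  forall x y, 0 <= x -> x <= y -> F i y <= F i x).

Lemma mod_lt s : (s mod n < n)%nat.
Proof. apply Nat.mod_upper_bound; lia. Qed.

Lemma comp_from_S_last m : forall s x,
  comp_from F n s (S m) x = F ((s + m) mod n)%nat (comp_from F n s m x).
Proof.
  induction m as [| m IHm]; intros s x.
  - simpl. now rewrite Nat.add_0_r.
  - change (comp_from F n s (S (S m)) x) with (comp_from F n (S s) (S m) (F (s mod n)%nat x)).
    rewrite IHm. simpl. do 2 f_equal. lia.
Qed.

Lemma comp_from_nonneg m : forall s x, 0 <= x -> 0 <= comp_from F n s m x.
Proof.
  induction m as [| m IHm]; intros s x x_ge0; simpl; [assumption|].
  apply IHm, Rlt_le, F_pos; [apply mod_lt | assumption].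
Qed.

Lemma comp_from_parity m : forall s x y, 0 <= x -> x <= y ->
  (Nat.Even m -> comp_from F n s m x <= comp_from F n s m y) /\
  (Nat.Odd m -> comp_from F n s m y <= comp_from F n s m x).
Proof.
  induction m as [| m IHm]; intros s x y x_ge0 le_xy.
  - split; intros par; [simpl; lra | now apply Nat.odd_spec in par].
  - simpl. rewrite Nat.Even_succ, Nat.Odd_succ.
    pose proof (F_antitone _ (mod_lt s) x y x_ge0 le_xy).
    pose proof (F_pos _ (mod_lt s) y ltac:(lra)).
    destruct (IHm (S s) (F (s mod n)%nat y) (F (s mod n)%nat x)) as [even_m odd_m];
      [lra | assumption |].
    split; assumption.
Qed.

Lemma comp_from_fixpoint s : Nat.Even n -> exists x, 0 < x /\ comp_from F n s n x = x.
Proof.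
  intros n_even.
  assert (n_eq : n = S (pred n)) by lia.
  set (last := ((s + pred n) mod n)%nat).
  assert (last_lt : (last < n)%nat) by apply mod_lt.
  assert (comp_last : forall x, comp_from F n s n x = F last (comp_from F n s (pred n) x)).
  { intro x. pose proof (comp_from_S_last (pred n) s x) as split_last.
    now rewrite <- n_eq in split_last. }
  destruct (monotone_bounded_fixpoint (comp_from F n s n) (F last 0)) as [c [c_ge0 c_fix]].
  - intros x x_ge0. rewrite comp_last. pose proof (comp_from_nonneg (pred n) s x x_ge0). split.
    + now apply Rlt_le, F_pos.
    + now apply F_antitone.
  - intros x y x_ge0 le_xy. exact (proj1 (comp_from_parity n s x y x_ge0 le_xy) n_even).
  - exists c. split; [| exact c_fix].
    rewrite <- c_fix, comp_last. now apply F_pos, comp_from_nonneg.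
Qed.

Fixpoint orbit (x : R) (m : nat) : R :=
  match m with
  | O => x
  | S m' => F (m' mod n)%nat (orbit x m')
  end.

Lemma comp_from_orbit x m : forall s, comp_from F n s m (orbit x s) = orbit x (s + m).
Proof.
  induction m as [| m IHm]; intro s; simpl.
  - now rewrite Nat.add_0_r.
  - change (F (s mod n)%nat (orbit x s)) with (orbit x (S s)).
    rewrite IHm. f_equal. lia.
Qed.

Lemma orbit_succ x i : (i < n)%nat -> orbit x (S i) = F i (orbit x i).
Proof. intros i_lt. simpl. now rewrite Nat.mod_small. Qed.

Lemma orbit_nonneg x m : 0 <= x -> 0 <= orbit x m.
Proof.
  intros x_ge0. induction m as [| m IHm]; [exact x_ge0|].
  apply Rlt_le, F_pos; [apply mod_lt | exact IHm].
Qed.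

Lemma orbit_pos x m : 0 <= x -> 0 < orbit x (S m).
Proof. intros x_ge0. apply F_pos; [apply mod_lt | now apply orbit_nonneg]. Qed.

Section Fixed.

Variable x : R.
Hypothesis x_fixed : comp_from F n 0 n x = x.

Lemma orbit_periodic m : orbit x (m + n) = orbit x m.
Proof.
  induction m as [| m IHm].
  - now rewrite <- comp_from_orbit.
  - simpl. rewrite IHm, <- (Nat.Div0.mod_add m 1 n), Nat.mul_1_l. reflexivity.
Qed.

Lemma orbit_cyc_map i : cyc_map F n i (orbit x (S i)) = orbit x (S i).
Proof. unfold cyc_map. now rewrite comp_from_orbit, orbit_periodic. Qed.

Lemma orbit_prev i : (i < n)%nat -> orbit x (S (prev n i)) = orbit x i.
Proof.
  intros i_lt. unfold prev. destruct i as [| j].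
  - rewrite Nat.mod_small by lia. replace (S (0 + n - 1)) with (0 + n)%nat by lia.
    apply orbit_periodic.
  - replace (S j + n - 1)%nat with (j + 1 * n)%nat by lia.
    now rewrite Nat.Div0.mod_add, Nat.mod_small by lia.
Qed.

End Fixed.

End Cycle.

Theorem proposition3 (n : nat) (a dr dp k : nat -> R -> R) :
  (2 <= n)%nat -> Nat.Even n ->
  standing n a dr dp k ->
  (forall i, (i < n)%nat ->
     exists alpha : R, is_lim (a i) p_infty alpha /\ 0 < alpha) ->
  (forall i, (i < n)%nat ->
     exists deltaR : Rbar, is_lim (dr i) p_infty deltaR /\
       Rbar_lt (a i 0) deltaR) ->
  (forall i, (i < n)%nat ->
     exists deltaP : Rbar, is_lim (dp i) p_infty deltaP /\
       Rbar_lt (k i (inv_nonneg (dr i) (a i 0))) deltaP) ->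
  (forall i, (i < n)%nat ->
     exists x : R, 0 < x /\ x = cyc_map (fmap a dr dp k) n i x) /\
  (exists pstar : nat -> R,
     (forall i, (i < n)%nat ->
        0 < pstar i /\ pstar i = cyc_map (fmap a dr dp k) n i (pstar i)) /\
     steady_state n a dr dp k
       (fun i => inv_nonneg (dr i) (a i (pstar (prev n i)))) pstar).
Proof.
  intros n_ge2 n_even st _ deltaR_gt deltaP_gt.
  set (F := fmap a dr dp k).
  assert (n_pos : (0 < n)%nat) by lia.
  pose proof (fun i i_lt => standing_gene n a dr dp k i st i_lt
                (deltaR_gt i i_lt) (deltaP_gt i i_lt)) as gene.
  assert (F_pos : forall i, (i < n)%nat -> forall x, 0 <= x -> 0 < F i x)
    by (intros i i_lt x x_ge0; apply (gene i i_lt), x_ge0).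
  assert (F_antitone : forall i, (i < n)%nat ->
    forall x y, 0 <= x -> x <= y -> F i y <= F i x) by apply gene.
  destruct (comp_from_fixpoint F n n_pos F_pos F_antitone 0 n_even) as [x [x_pos x_fixed]].
  set (pstar i := orbit F n x (S i)).
  assert (pstar_fixed : forall i, (i < n)%nat ->
            0 < pstar i /\ pstar i = cyc_map F n i (pstar i)).
  { intros i _. unfold pstar. split; [apply orbit_pos; auto; lra | now rewrite orbit_cyc_map]. }
  split; [intros i i_lt; exists (pstar i); now apply pstar_fixed |].
  exists pstar. split; [exact pstar_fixed |].
  intros i i_lt. unfold pstar. rewrite orbit_prev, orbit_succ by auto.
  destruct (gene i i_lt) as [spec _].
  apply spec, (orbit_nonneg F n n_pos F_pos); lra.
Qed.
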